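(* Let $C\subset\mathbb{R}^N$ be closed and nonempty, let $h:\mathbb{R}^N\to\mathbb{R}$ be differentiable with $L$-Lipschitz gradient ($L>0$), and suppose $f:=h+\delta_C$ is a K\L{} function. Fix $\varepsilon>0$. Let $x^0\in\mathbb{R}^N$ and let $(x^k)$ be a bounded sequence generated by $$x^{k+1}\in\mathrm{proj}_C^{A_k}\big(x^k-\lambda_kA_k^{-1}\nabla h(x^k)\big),$$ where $A_k=P_k+\varepsilon I_N$, $P_k=\mathrm{proj}_{\mathcal S_+(\mathbb{R}^N)}(H_k)$ and $H_k\in\partial^2h(x^k)$, and the step sizes satisfy $0<\lambda_k\le\bar\lambda<\varepsilon/L$, $(\lambda_k)\notin\ell^1$, and $\sup_k\lambda_{k+1}/\lambda_k<+\infty$. Then $\sum_k\|x^{k+1}-x^k\|<\infty$ and $(x^k)$ converges to a critical point of $f$.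
   Context: $\delta_C$ is the indicator function of $C$ ($0$ on $C$, $+\infty$ outside). For a symmetric positive definite matrix $A$, $\mathrm{proj}_C^A(z)=\arg\min_{y\in C}\langle A(y-z),y-z\rangle$. $\mathcal S_+(\mathbb{R}^N)$ is the closed convex cone of symmetric positive semidefinite matrices and $\mathrm{proj}_{\mathcal S_+(\mathbb{R}^N)}$ the Frobenius-norm projection onto it. The generalized (Clarke) Hessian is $\partial^2h(x)=\mathrm{co}\{\lim_n\nabla^2h(x_n): \nabla h \text{ differentiable at } x_n,\ x_n\to x\}$. Critical point: $0\in\partial f(x)$, $\partial f$ the limiting Fréchet subdifferential. K\L{} function: proper lsc $f$ such that at every $x^*$ with $\partial f(x^* )\ne\emptyset$ there are $\eta\in]0,\infty]$, $\delta>0$ and a continuous concave $\varphi:[0,\eta[\to[0,\infty[$, $\varphi(0)=0$, $C^1$ with $\varphi'>0$ on $]0,\eta[$, with $\varphi'(f(x)-f(x^* ))\inf_{p\in\partial f(x)}\|p\|\ge1$ whenever $\|x-x^*\|<\delta$ and $f(x^* )<f(x)<f(x^* )+\eta$. *)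

From Stdlib Require Import Reals ClassicalEpsilon.
From mathcomp Require Import all_boot.
Set Implicit Arguments. Unset Strict Implicit.
Local Open Scope R_scope.

Definition vec (N : nat) := 'I_N -> R.
Definition mat (N : nat) := 'I_N -> 'I_N -> R.

Section Lin.
Variable N : nat.
Definition vsum (F : 'I_N -> R) : R := \big[Rplus/0]_(i < N) F i.
Definition dot (u v : vec N) : R := vsum (fun i => u i * v i).
Definition vnorm (v : vec N) : R := sqrt (dot v v).
Definition vzero : vec N := fun _ => 0.
Definition vsub (u v : vec N) : vec N := fun i => u i - v i.
Definition vscale (a : R) (u : vec N) : vec N := fun i => a * u i.
Definition mulmv (A : mat N) (v : vec N) : vec N := fun i => vsum (fun j => A i j * v j).
Definition idm : mat N := fun i j => if i == j then 1 else 0.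
Definition madd (A B : mat N) : mat N := fun i j => A i j + B i j.
Definition msub (A B : mat N) : mat N := fun i j => A i j - B i j.
Definition mscale (a : R) (A : mat N) : mat N := fun i j => a * A i j.
Definition frob (A : mat N) : R := sqrt (vsum (fun i => vsum (fun j => A i j * A i j))).

Definition vconv (x : nat -> vec N) (l : vec N) : Prop :=
  forall e, 0 < e -> exists K, forall k, (K <= k)%nat -> vnorm (vsub (x k) l) < e.
Definition mconv (M : nat -> mat N) (l : mat N) : Prop :=
  forall e, 0 < e -> exists K, forall k, (K <= k)%nat -> frob (msub (M k) l) < e.

Definition closed_vset (C : vec N -> Prop) : Prop :=
  forall (x : nat -> vec N) (l : vec N), (forall k, C (x k)) -> vconv x l -> C l.

Definition has_gradient (h : vec N -> R) (x g : vec N) : Prop :=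
  forall e, 0 < e -> exists d, 0 < d /\ forall y, vnorm (vsub y x) < d ->
    Rabs (h y - h x - dot g (vsub y x)) <= e * vnorm (vsub y x).
Definition lipschitz (G : vec N -> vec N) (L : R) : Prop :=
  forall x y, vnorm (vsub (G x) (G y)) <= L * vnorm (vsub x y).
Definition has_jacobian (G : vec N -> vec N) (x : vec N) (J : mat N) : Prop :=
  forall e, 0 < e -> exists d, 0 < d /\ forall y, vnorm (vsub y x) < d ->
    vnorm (vsub (vsub (G y) (G x)) (mulmv J (vsub y x))) <= e * vnorm (vsub y x).

Definition hess_limits (gradh : vec N -> vec N) (x : vec N) (J : mat N) : Prop :=
  exists (xn : nat -> vec N) (Jn : nat -> mat N),
    vconv xn x /\ (forall n, has_jacobian gradh (xn n) (Jn n)) /\ mconv Jn J.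
Definition mat_co (S : mat N -> Prop) (M : mat N) : Prop :=
  exists (m : nat) (w : 'I_m -> R) (Ms : 'I_m -> mat N),
    (forall l, 0 <= w l) /\ \big[Rplus/0]_(l < m) w l = 1 /\ (forall l, S (Ms l)) /\
    forall i j, M i j = \big[Rplus/0]_(l < m) (w l * Ms l i j).
Definition clarke_hessian (gradh : vec N -> vec N) (x : vec N) (H : mat N) : Prop :=
  mat_co (hess_limits gradh x) H.

Definition psd (M : mat N) : Prop :=
  (forall i j, M i j = M j i) /\ forall v, 0 <= dot v (mulmv M v).
Definition is_proj_psd (H P : mat N) : Prop :=
  psd P /\ forall Q, psd Q -> frob (msub H P) <= frob (msub H Q).

Definition in_proj_A (C : vec N -> Prop) (A : mat N) (z y : vec N) : Prop :=
  C y /\ forall y', C y' ->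
    dot (mulmv A (vsub y z)) (vsub y z) <= dot (mulmv A (vsub y' z)) (vsub y' z).

End Lin.

(* extended reals ]-oo,+oo] (only +oo is needed: functions are proper_fun) *)
Inductive ereal := EFin (r : R) | EPInf.
Definition Rlt_e (r : R) (e : ereal) : Prop :=
  match e with EFin s => r < s | EPInf => True end.

Section Nonsmooth.
Variable N : nat.
Definition efun := vec N -> ereal.

Definition h_plus_ind (h : vec N -> R) (C : vec N -> Prop) : efun :=
  fun x => if excluded_middle_informative (C x) then EFin (h x) else EPInf.

Definition frechet_subdiff (f : efun) (x v : vec N) : Prop :=
  exists fx, f x = EFin fx /\
  forall e, 0 < e -> exists d, 0 < d /\ forall y, vnorm (vsub y x) < d ->
    match f y with
    | EFin fy => fx + dot v (vsub y x) - e * vnorm (vsub y x) <= fy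
    | EPInf => True end.

Definition limiting_subdiff (f : efun) (x v : vec N) : Prop :=
  exists fx, f x = EFin fx /\
  exists (xn : nat -> vec N) (fxn : nat -> R) (vn : nat -> vec N),
    vconv xn x /\ (forall n, f (xn n) = EFin (fxn n)) /\ Un_cv fxn fx /\
    (forall n, frechet_subdiff f (xn n) (vn n)) /\ vconv vn v.

Definition critical (f : efun) (x : vec N) : Prop := limiting_subdiff f x (@vzero N).

Definition proper_fun (f : efun) : Prop := exists x r, f x = EFin r.
Definition lsc (f : efun) : Prop :=
  forall x r, Rlt_e r (f x) -> exists d, 0 < d /\
    forall y, vnorm (vsub y x) < d -> Rlt_e r (f y).

Definition KL (f : efun) : Prop :=
  proper_fun f /\ lsc f /\
  forall xs, (exists p, limiting_subdiff f xs p) ->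
  forall fxs, f xs = EFin fxs ->
  exists (eta : ereal) (delta : R) (phi phi' : R -> R),
    Rlt_e 0 eta /\ 0 < delta /\
    phi 0 = 0 /\
    (forall t, 0 <= t -> Rlt_e t eta -> 0 <= phi t) /\
    (forall t, 0 <= t -> Rlt_e t eta -> forall e, 0 < e -> exists d, 0 < d /\
       forall s, 0 <= s -> Rlt_e s eta -> Rabs (s - t) < d -> Rabs (phi s - phi t) < e) /\
    (forall a b th, 0 <= a -> Rlt_e a eta -> 0 <= b -> Rlt_e b eta -> 0 <= th <= 1 ->
       th * phi a + (1 - th) * phi b <= phi (th * a + (1 - th) * b)) /\
    (forall t, 0 < t -> Rlt_e t eta ->
       derivable_pt_lim phi t (phi' t) /\ continuity_pt phi' t /\ 0 < phi' t) /\
    (forall x fx, vnorm (vsub x xs) < delta -> f x = EFin fx -> fxs < fx ->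
       Rlt_e (fx - fxs) eta ->
       forall p, limiting_subdiff f x p -> 1 <= phi' (fx - fxs) * vnorm p).

End Nonsmooth.

(* The metrics A_k = P_k + eps I are uniformly equivalent to the identity:
   eps I <= A_k, and |A_k| is bounded because Clarke Hessians of a function with
   L-Lipschitz gradient have entries bounded by L.  With lam_k < eps / L the
   descent lemma gives sufficient decrease
     h(x^k) - h(x^{k+1}) >= c |x^{k+1} - x^k|^2 / lam_k,
   and the optimality of the projection gives a Frechet subgradient of f at
   x^{k+1} of norm O(|x^{k+1} - x^k| / lam_k).  Since (lam_k) is not summable,
   steps with |x^{k+1} - x^k| = o(lam_k) occur infinitely often, and a cluster
   point xs along them is critical.  Near xs, the KL inequality at xs together
   with lam_{k+1} / lam_k <= M gives, for r_k = h(x^k) - h(xs),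
     2 |x^{k+2} - x^{k+1}| <= |x^{k+1} - x^k| + beta (phi(r_{k+1}) - phi(r_{k+2})),
   which telescopes: the sequence has finite length, hence converges to xs. *)

From Stdlib Require Import Reals ClassicalEpsilon.
From mathcomp Require Import all_boot.
From Stdlib Require Import FunctionalExtensionality Lra Psatz Classical.
From HB Require Import structures.
From mathcomp Require Import zify.
Set Implicit Arguments. Unset Strict Implicit.
Local Open Scope R_scope.

HB.instance Definition _ :=
  Monoid.isComLaw.Build R 0 Rplus (fun a b c => esym (Rplus_assoc a b c)) Rplus_comm Rplus_0_l.

Lemma Rabs_le_between x a : Rabs x <= a <-> -a <= x <= a.
Proof. rewrite /Rabs; case: Rcase_abs; split; lra. Qed.

Lemma Rabs_lt_between x a : Rabs x < a <-> -a < x < a.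
Proof. rewrite /Rabs; case: Rcase_abs; split; lra. Qed.

Lemma Rsqr_abs_eq x : x * x = Rabs x * Rabs x.
Proof. by rewrite -Rabs_mult Rabs_right //; apply: Rle_ge; nra. Qed.

Section Sums.
Variable N : nat.
Implicit Types F G : 'I_N -> R.

Lemma eq_vsum F G : (forall i, F i = G i) -> vsum F = vsum G.
Proof. by move=> FG; apply: eq_bigr. Qed.

Lemma vsumD F G : vsum (fun i => F i + G i) = vsum F + vsum G.
Proof. exact: big_split. Qed.

Lemma vsumZ a F : vsum (fun i => a * F i) = a * vsum F.
Proof.
apply: (big_ind2 (fun s t => s = a * t)) => [|s1 s2 t1 t2 -> ->|//]; ring.
Qed.

Lemma vsumB F G : vsum (fun i => F i - G i) = vsum F - vsum G.
Proof.
have -> : vsum F - vsum G = vsum F + (-1) * vsum G by ring.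
by rewrite -vsumZ -vsumD; apply: eq_vsum => i; ring.
Qed.

Lemma vsum_le F G : (forall i, F i <= G i) -> vsum F <= vsum G.
Proof. by move=> FG; apply: (big_ind2 Rle) => [|s1 s2 t1 t2|i _]; [lra|lra|]. Qed.

Lemma vsum_ge0 F : (forall i, 0 <= F i) -> 0 <= vsum F.
Proof. by move=> F0; apply: (big_ind (Rle 0)) => [|s t|i _]; [lra|lra|]. Qed.

Lemma vsum_const c : vsum (fun _ : 'I_N => c) = INR N * c.
Proof.
rewrite /vsum big_const_ord; elim: N => [|n IH]; first by rewrite /=; ring.
by rewrite iterS IH S_INR; ring.
Qed.

Lemma vsum_abs_le F : Rabs (vsum F) <= vsum (fun i => Rabs (F i)).
Proof.
apply: (big_ind2 (fun s t => Rabs s <= t)) => [|s1 s2 t1 t2 h1 h2|i _].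
- by rewrite Rabs_R0; lra.
- by have := Rabs_triang s1 t1; lra.
- exact: Rle_refl.
Qed.

Lemma vsum_ge_term F i : (forall j, 0 <= F j) -> F i <= vsum F.
Proof.
move=> F0; rewrite /vsum (bigD1 i) //= -{1}(Rplus_0_r (F i)).
by apply: Rplus_le_compat_l; apply: (big_ind (Rle 0)) => [|s t|j _]; [lra|lra|].
Qed.

Lemma vsum_delta i F : vsum (fun j => (if i == j then 1 else 0) * F j) = F i.
Proof.
rewrite /vsum (bigD1 i) //= eqxx big1 => [|j /negbTE]; last by rewrite eq_sym => ->; ring.
ring.
Qed.

Lemma vsum_exchange (F : 'I_N -> 'I_N -> R) :
  vsum (fun i => vsum (F i)) = vsum (fun j => vsum (fun i => F i j)).
Proof. exact: exchange_big. Qed.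

End Sums.

Section Euclid.
Variable N : nat.
Implicit Types u v w : vec N.

Lemma dot_sym u v : dot u v = dot v u.
Proof. by apply: eq_vsum => i; ring. Qed.

Lemma dotZl a u v : dot (fun i => a * u i) v = a * dot u v.
Proof. by rewrite /dot -vsumZ; apply: eq_vsum => i; ring. Qed.

Lemma dot_ge0 v : 0 <= dot v v.
Proof. by apply: vsum_ge0 => i; nra. Qed.

Lemma dot_combination p q u v :
  dot (fun i => p * u i + q * v i) (fun i => p * u i + q * v i) =
  p * p * dot u u + 2 * p * q * dot u v + q * q * dot v v.
Proof. by rewrite /dot -!vsumZ -!vsumD; apply: eq_vsum => i; ring. Qed.

Lemma vnorm_ge0 v : 0 <= vnorm v.
Proof. exact: sqrt_pos. Qed.

Lemma vnorm_sq v : vnorm v * vnorm v = dot v v.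
Proof. exact/sqrt_sqrt/dot_ge0. Qed.

Lemma vnorm_le_of_sq v c : 0 <= c -> dot v v <= c * c -> vnorm v <= c.
Proof. by move=> c0 vc; rewrite -(sqrt_square c) //; apply: sqrt_le_1_alt. Qed.

Lemma dot_eq0_of_vnorm_eq0 u v : vnorm u = 0 -> dot u v = 0.
Proof.
move=> u0; have uu : dot u u = 0 by rewrite -vnorm_sq u0; ring.
rewrite /dot /vsum big1 // => i _.
have := vsum_ge_term (F := fun j => u j * u j) i (fun j => Rle_0_sqr (u j)).
rewrite -/(dot u u) uu => ui.
have -> : u i = 0 by apply: Rle_antisym; nra.
ring.
Qed.

Lemma Cauchy_Schwarz u v : Rabs (dot u v) <= vnorm u * vnorm v.
Proof.
have a0 := vnorm_ge0 u; have b0 := vnorm_ge0 v.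
have [a_eq0|a_neq0] := Req_dec (vnorm u) 0.
  by rewrite dot_eq0_of_vnorm_eq0 // Rabs_R0; nra.
have [b_eq0|b_neq0] := Req_dec (vnorm v) 0.
  by rewrite dot_sym dot_eq0_of_vnorm_eq0 // Rabs_R0; nra.
(* expand |b u - a v|^2 >= 0 and |b u + a v|^2 >= 0 *)
have e1 := dot_combination (vnorm v) (- vnorm u) u v.
have e2 := dot_combination (vnorm v) (vnorm u) u v.
have g1 := dot_ge0 (fun i => vnorm v * u i + - vnorm u * v i).
have g2 := dot_ge0 (fun i => vnorm v * u i + vnorm u * v i).
rewrite -(vnorm_sq u) -(vnorm_sq v) in e1 e2.
have ab : 0 < vnorm u * vnorm v by nra.
apply/Rabs_le_between; split; nra.
Qed.

Lemma dot_le_vnorm u v : dot u v <= vnorm u * vnorm v.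
Proof. by have := Cauchy_Schwarz u v; have := Rle_abs (dot u v); lra. Qed.

Lemma vnorm_scale a u : vnorm (fun i => a * u i) = Rabs a * vnorm u.
Proof.
rewrite /vnorm dotZl dot_sym dotZl -Rmult_assoc sqrt_mult; [|nra|exact: dot_ge0].
by rewrite (sqrt_Rsqr_abs a).
Qed.

Lemma vnorm_add_le u v : vnorm (fun i => u i + v i) <= vnorm u + vnorm v.
Proof.
apply: vnorm_le_of_sq; first by have := vnorm_ge0 u; have := vnorm_ge0 v; lra.
have -> : (fun i => u i + v i) = (fun i => 1 * u i + 1 * v i).
  by apply: functional_extensionality => i; ring.
rewrite dot_combination; have := dot_le_vnorm u v.
rewrite -(vnorm_sq u) -(vnorm_sq v); nra.
Qed.

Lemma vnorm_subC u v : vnorm (vsub u v) = vnorm (vsub v u).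
Proof.
have -> : vsub u v = (fun i => (-1) * vsub v u i).
  by apply: functional_extensionality => i; rewrite /vsub; ring.
by rewrite vnorm_scale Rabs_Ropp Rabs_R1 Rmult_1_l.
Qed.

Lemma vnorm_triangle u v w : vnorm (vsub u w) <= vnorm (vsub u v) + vnorm (vsub v w).
Proof.
have -> : vsub u w = (fun i => vsub u v i + vsub v w i).
  by apply: functional_extensionality => i; rewrite /vsub; ring.
exact: vnorm_add_le.
Qed.

Lemma vnorm_sub_self u : vnorm (vsub u u) = 0.
Proof.
have -> : vsub u u = (fun i => 0 * u i) by apply: functional_extensionality => i; rewrite /vsub; ring.
by rewrite vnorm_scale Rabs_R0 Rmult_0_l.
Qed.

Lemma vsub0 u : vsub u (@vzero N) = u.
Proof. by apply: functional_extensionality => i; rewrite /vsub /vzero; ring. Qed.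

Lemma coord_le_vnorm v i : Rabs (v i) <= vnorm v.
Proof.
rewrite -(sqrt_square (Rabs (v i))); last exact: Rabs_pos.
rewrite -Rsqr_abs_eq; apply: sqrt_le_1_alt.
by apply: (vsum_ge_term (F := fun j => v j * v j)) => j; nra.
Qed.

Lemma vnorm_le_sum_abs v : vnorm v <= vsum (fun i => Rabs (v i)).
Proof.
set S := vsum _; have S0 : 0 <= S by apply: vsum_ge0 => i; exact: Rabs_pos.
apply: vnorm_le_of_sq => //; rewrite {2}/S -vsumZ /dot.
apply: vsum_le => i; rewrite (Rsqr_abs_eq (v i)).
have := vsum_ge_term (F := fun j => Rabs (v j)) i (fun j => Rabs_pos _).
have := Rabs_pos (v i); rewrite -/S; nra.
Qed.

Lemma frob_ge0 (A : mat N) : 0 <= frob A.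
Proof. exact: sqrt_pos. Qed.

Lemma frob_sq (A : mat N) : frob A * frob A = vsum (fun i => vsum (fun j => A i j * A i j)).
Proof. by apply: sqrt_sqrt; apply: vsum_ge0 => i; apply: vsum_ge0 => j; nra. Qed.

Lemma vnorm_mulmv_le (A : mat N) v : vnorm (mulmv A v) <= frob A * vnorm v.
Proof.
apply: vnorm_le_of_sq; first by have := frob_ge0 A; have := vnorm_ge0 v; nra.
have -> : frob A * vnorm v * (frob A * vnorm v) = vsum (fun i => dot (A i) (A i) * dot v v).
  rewrite (eq_vsum (G := fun i => dot v v * dot (A i) (A i))); last by move=> i; ring.
  by rewrite vsumZ -frob_sq -vnorm_sq; ring.
apply: vsum_le => i; rewrite -!vnorm_sq.
have := Cauchy_Schwarz (A i) v; have := Rabs_pos (dot (A i) v).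
change (mulmv A v i) with (dot (A i) v); rewrite Rsqr_abs_eq.
have := vnorm_ge0 (A i); have := vnorm_ge0 v; nra.
Qed.

Lemma entry_le_frob (A : mat N) i j : Rabs (A i j) <= frob A.
Proof.
apply: Rle_trans (coord_le_vnorm (A i) j) _; apply: sqrt_le_1_alt.
by apply: (vsum_ge_term (F := fun k => dot (A k) (A k))) => k; exact: dot_ge0.
Qed.

Lemma frob_le_of_entries (A : mat N) c : (forall i j, Rabs (A i j) <= c) ->
  frob A <= sqrt (vsum (fun _ : 'I_N => vsum (fun _ : 'I_N => c * c))).
Proof.
move=> Ac; apply: sqrt_le_1_alt; apply: vsum_le => i; apply: vsum_le => j.
by have := Ac i j; have := Rabs_pos (A i j); rewrite Rsqr_abs_eq; nra.
Qed.

Lemma mulmvZ (A : mat N) a u i : mulmv A (fun k => a * u k) i = a * mulmv A u i.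
Proof. by rewrite /mulmv -vsumZ; apply: eq_vsum => j; ring. Qed.

Lemma mulmvD (A : mat N) u w i : mulmv A (fun k => u k + w k) i = mulmv A u i + mulmv A w i.
Proof. by rewrite /mulmv -vsumD; apply: eq_vsum => j; ring. Qed.

Lemma mulmv_shift (P : mat N) e v i :
  mulmv (madd P (mscale e (@idm N))) v i = mulmv P v i + e * v i.
Proof.
rewrite /mulmv -vsum_delta -vsumZ -vsumD; apply: eq_vsum => j.
by rewrite /madd /mscale /idm; ring.
Qed.

Lemma dot_mulmv_sym (A : mat N) u v : (forall i j, A i j = A j i) ->
  dot (mulmv A u) v = dot u (mulmv A v).
Proof.
move=> A_sym; rewrite /dot /mulmv.
rewrite (eq_vsum (G := fun i => vsum (fun j => v i * (A i j * u j)))); last first.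
  by move=> i; rewrite vsumZ Rmult_comm.
rewrite [RHS](eq_vsum (G := fun i => vsum (fun j => u i * (A i j * v j)))); last first.
  by move=> i; rewrite vsumZ.
by rewrite [RHS]vsum_exchange; apply: eq_vsum => i; apply: eq_vsum => j; rewrite A_sym; ring.
Qed.

Lemma quad_form_add (A : mat N) u m : (forall i j, A i j = A j i) ->
  dot (mulmv A (fun i => u i + m i)) (fun i => u i + m i) =
  dot (mulmv A u) u + 2 * dot (mulmv A m) u + dot (mulmv A m) m.
Proof.
move=> A_sym.
have -> : mulmv A (fun i => u i + m i) = (fun i => mulmv A u i + mulmv A m i).
  by apply: functional_extensionality => i; exact: mulmvD.
have um : dot (mulmv A u) m = dot (mulmv A m) u by rewrite dot_mulmv_sym // dot_sym.
have -> : 2 * dot (mulmv A m) u = dot (mulmv A u) m + dot (mulmv A m) u by rewrite um; ring.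
by rewrite /dot -!vsumD; apply: eq_vsum => i; ring.
Qed.

End Euclid.

Lemma Rabs_diff_le_of_deriv (F F' : R -> R) K :
  (forall c, 0 <= c <= 1 -> derivable_pt_lim F c (F' c)) ->
  (forall c, 0 < c < 1 -> Rabs (F' c) <= 2 * K * c) -> Rabs (F 1 - F 0) <= K.
Proof.
move=> dF F'_le.
(* the mean value theorem for F -/+ K t^2 *)
have dG s c : 0 <= c <= 1 ->
    derivable_pt_lim (fun t => F t + s * K * Rsqr t) c (F' c + s * K * (2 * c)).
  move=> c01; exact: derivable_pt_lim_plus (dF c c01)
    (derivable_pt_lim_scal _ (s * K) _ _ (derivable_pt_lim_Rsqr c)).
have [c [Ec c01]] := MVT_cor2 _ _ 0 1 Rlt_0_1 (dG (-1)).
have [c' [Ec' c'01]] := MVT_cor2 _ _ 0 1 Rlt_0_1 (dG 1).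
move: (F'_le c c01) (F'_le c' c'01) => /Rabs_le_between ? /Rabs_le_between ?.
rewrite /Rsqr in Ec Ec'; apply/Rabs_le_between; split; nra.
Qed.

Section Smooth.
Variable N : nat.
Variables (h : vec N -> R) (gradh : vec N -> vec N).
Hypothesis h_grad : forall z, has_gradient h z (gradh z).

Lemma h_continuous x e : 0 < e ->
  exists d, 0 < d /\ forall y, vnorm (vsub y x) < d -> Rabs (h y - h x) < e.
Proof.
move=> e0; have [d1 [d1_0 Hd1]] := h_grad x Rlt_0_1.
set g := vnorm (gradh x); have g0 : 0 <= g := vnorm_ge0 _.
exists (Rmin d1 (e / (g + 2))); split.
  by apply: Rmin_pos => //; apply: Rdiv_lt_0_compat; lra.
move=> y y_near; set n := vnorm (vsub y x) in y_near.
have n0 : 0 <= n := vnorm_ge0 _.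
have n_d1 : n < d1 by have := Rmin_l d1 (e / (g + 2)); lra.
have n_e : n * (g + 2) < e.
  have := Rmin_r d1 (e / (g + 2)); move=> ?.
  have : n < e / (g + 2) by lra.
  by move/(Rmult_lt_compat_r (g + 2)); rewrite /Rdiv Rmult_assoc Rinv_l; lra.
have := Hd1 y n_d1; have := Cauchy_Schwarz (gradh x) (vsub y x).
rewrite -/n -/g => /Rabs_le_between ? /Rabs_le_between ?.
apply/Rabs_lt_between; split; nra.
Qed.

Lemma derive_along_line x u t :
  derivable_pt_lim (fun s => h (fun i => x i + s * u i)) t
    (dot (gradh (fun i => x i + t * u i)) u).
Proof.
move=> e e0; set z := fun i => x i + t * u i.
set nu := vnorm u; have nu0 : 0 <= nu := vnorm_ge0 _.
have [d1 [d1_0 Hd1]] := h_grad z (Rdiv_lt_0_compat e (2 * (nu + 1)) e0 ltac:(lra)).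
have d0 : 0 < d1 / (nu + 1) by apply: Rdiv_lt_0_compat; lra.
exists (mkposreal _ d0) => s s0 /= s_small.
have s_pos : 0 < Rabs s by apply: Rabs_pos_lt.
have step : vsub (fun i => x i + (t + s) * u i) z = (fun i => s * u i).
  by apply: functional_extensionality => i; rewrite /vsub /z; ring.
have s_nu : Rabs s * nu < d1.
  have : Rabs s * (nu + 1) < d1.
    by move: s_small => /(Rmult_lt_compat_r (nu + 1)); rewrite /Rdiv Rmult_assoc Rinv_l; lra.
  nra.
have := Hd1 (fun i => x i + (t + s) * u i); rewrite step vnorm_scale dot_sym dotZl dot_sym.
move=> /(_ s_nu); set A := _ - _ - _; rewrite -/nu => A_le.
have -> : (h (fun i => x i + (t + s) * u i) - h z) / s - dot (gradh z) u = A / s.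
  by rewrite /A; field.
rewrite /Rdiv Rabs_mult Rabs_inv; apply: (Rmult_lt_reg_r (Rabs s)) => //.
rewrite Rmult_assoc Rinv_l; last lra.
have : e / (2 * (nu + 1)) * (Rabs s * nu) < e * Rabs s.
  have -> : e / (2 * (nu + 1)) * (Rabs s * nu) = e * Rabs s * (nu / (2 * (nu + 1))).
    by field; lra.
  have : nu / (2 * (nu + 1)) < 1.
    by apply: (Rmult_lt_reg_r (2 * (nu + 1))); [lra | rewrite /Rdiv Rmult_assoc Rinv_l; lra].
  have : 0 < e * Rabs s by nra.
  nra.
lra.
Qed.

Variable L : R.
Hypothesis gradh_lip : lipschitz gradh L.

Lemma descent_lemma x y :
  Rabs (h y - h x - dot (gradh x) (vsub y x)) <= L / 2 * (vnorm (vsub y x) * vnorm (vsub y x)).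
Proof.
set u := vsub y x; set nu := vnorm u; have nu0 : 0 <= nu := vnorm_ge0 _.
set F := fun s => h (fun i => x i + s * u i) - dot (gradh x) u * s.
have F1 : (fun i => x i + 1 * u i) = y.
  by apply: functional_extensionality => i; rewrite /u /vsub; ring.
have F0 : (fun i => x i + 0 * u i) = x.
  by apply: functional_extensionality => i; ring.
have <- : F 1 - F 0 = h y - h x - dot (gradh x) u by rewrite /F F1 F0; ring.
apply: (Rabs_diff_le_of_deriv
  (F' := fun c => dot (gradh (fun i => x i + c * u i)) u - dot (gradh x) u * 1)).
  move=> c _; apply: derivable_pt_lim_minus; first exact: derive_along_line.
  exact: derivable_pt_lim_scal _ _ _ _ (derivable_pt_lim_id c).
move=> c c01; rewrite Rmult_1_r.
have -> : dot (gradh (fun i => x i + c * u i)) u - dot (gradh x) u =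
          dot (vsub (gradh (fun i => x i + c * u i)) (gradh x)) u.
  by rewrite /dot -vsumB; apply: eq_vsum => i; rewrite /vsub; ring.
apply: Rle_trans (Cauchy_Schwarz _ _) _.
have := gradh_lip (fun i => x i + c * u i) x.
have -> : vsub (fun i => x i + c * u i) x = (fun i => c * u i).
  by apply: functional_extensionality => i; rewrite /vsub; ring.
rewrite vnorm_scale Rabs_right -/nu; last lra.
have := vnorm_ge0 (vsub (gradh (fun i => x i + c * u i)) (gradh x)); nra.
Qed.

End Smooth.

Section HessianBound.
Variable N : nat.
Variables (gradh : vec N -> vec N) (L : R).
Hypothesis gradh_lip : lipschitz gradh L.

Definition unit_vec (j : 'I_N) : vec N := fun k => if j == k then 1 else 0.

Lemma vnorm_unit_vec j : vnorm (unit_vec j) = 1.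
Proof.
rewrite /vnorm /dot (eq_vsum (G := fun k => (if j == k then 1 else 0) * unit_vec j k)) //.
by rewrite vsum_delta /unit_vec eqxx sqrt_1.
Qed.

Lemma mulmv_unit_vec (J : mat N) i j : mulmv J (unit_vec j) i = J i j.
Proof.
rewrite -(vsum_delta j (J i)); apply: eq_vsum => k.
by rewrite /unit_vec; ring.
Qed.

Lemma jacobian_norm_le x J : has_jacobian gradh x J ->
  forall w, vnorm (mulmv J w) <= L * vnorm w.
Proof.
move=> HJ w; apply: Rnot_lt_le => lt_Lb.
set a := vnorm (mulmv J w) in lt_Lb *; set b := vnorm w in lt_Lb *.
have b0 : 0 <= b := vnorm_ge0 _.
set e := (a - L * b) / (2 * (b + 1)).
have e0 : 0 < e by apply: Rdiv_lt_0_compat; lra.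
have [d [d0 Hd]] := HJ e e0.
set t := d / (2 * (b + 1)).
have t0 : 0 < t by apply: Rdiv_lt_0_compat; lra.
set y := fun i => x i + t * w i.
have yx : vsub y x = (fun i => t * w i).
  by apply: functional_extensionality => i; rewrite /vsub /y; ring.
have ny : vnorm (vsub y x) = t * b by rewrite yx vnorm_scale Rabs_right -/b //; lra.
have tb : t * b < d.
  have -> : t * b = d * (b / (2 * (b + 1))) by rewrite /t; field; lra.
  have : b / (2 * (b + 1)) < 1.
    by apply: (Rmult_lt_reg_r (2 * (b + 1))); [lra | rewrite /Rdiv Rmult_assoc Rinv_l; lra].
  nra.
have J_yx : mulmv J (vsub y x) = (fun i => t * mulmv J w i).
  by apply: functional_extensionality => i; rewrite yx mulmvZ.
have approx := Hd y ltac:(lra); have lip := gradh_lip y x.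
rewrite ny J_yx in approx; rewrite ny in lip.
have := vnorm_triangle (fun i => t * mulmv J w i) (vsub (gradh y) (gradh x)) (@vzero N).
rewrite !vsub0 vnorm_scale Rabs_right -/a; last lra.
rewrite vnorm_subC => tri.
have eb : 2 * e * b < a - L * b.
  have : e * (2 * (b + 1)) = a - L * b by rewrite /e; field; lra.
  nra.
have : t * a <= t * (e * b + L * b) by lra.
nra.
Qed.

Lemma jacobian_entry_le x J : has_jacobian gradh x J -> forall i j, Rabs (J i j) <= L.
Proof.
move=> HJ i j; rewrite -mulmv_unit_vec; apply: Rle_trans (coord_le_vnorm _ _) _.
by have := jacobian_norm_le HJ (unit_vec j); rewrite vnorm_unit_vec Rmult_1_r.
Qed.

Lemma hess_limit_entry_le x J : hess_limits gradh x J -> forall i j, Rabs (J i j) <= L.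
Proof.
move=> [xn [Jn [_ [HJ J_lim]]]] i j; apply: Rnot_lt_le => lt.
have [K HK] := J_lim (Rabs (J i j) - L) ltac:(lra).
have := HK K (leqnn K); have := entry_le_frob (msub (Jn K) J) i j.
have := jacobian_entry_le (HJ K) i j.
have := Rabs_triang (Jn K i j) (J i j - Jn K i j).
have -> : Jn K i j + (J i j - Jn K i j) = J i j by ring.
rewrite /msub Rabs_minus_sym; lra.
Qed.

Lemma clarke_hessian_entry_le x H : clarke_hessian gradh x H -> forall i j, Rabs (H i j) <= L.
Proof.
move=> [m [w [Ms [w0 [w1 [HMs HE]]]]]] i j; rewrite HE.
apply: Rle_trans (vsum_abs_le (fun l : 'I_m => w l * Ms l i j)) _.
have -> : L = vsum (fun l : 'I_m => w l * L).
  by rewrite (eq_vsum (G := fun l => L * w l)) ?vsumZ; [rewrite /vsum w1; ring | move=> l; ring].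
apply: vsum_le => l; rewrite Rabs_mult Rabs_right; last exact: Rle_ge.
exact/Rmult_le_compat_l/(hess_limit_entry_le (HMs l)).
Qed.

End HessianBound.

Lemma psd_zero N : psd (fun _ _ : 'I_N => 0).
Proof.
split=> // v; suff -> : dot v (mulmv (fun _ _ => 0) v) = 0 by lra.
rewrite /dot /vsum big1 // => i _; rewrite /mulmv /vsum big1 => [|j _]; ring.
Qed.

Lemma frob_proj_psd_le N (H P : mat N) : is_proj_psd H P -> frob P <= 2 * frob H.
Proof.
move=> [_ P_min]; have := P_min _ (@psd_zero N).
have -> : msub H (fun _ _ => 0) = H.
  by do 2![apply: functional_extensionality => ?]; rewrite /msub; ring.
move=> HP_le.
have HP_sq : frob (msub H P) * frob (msub H P) <= frob H * frob H.
  by have := frob_ge0 (msub H P); nra.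
suff : frob P * frob P <= 4 * (frob H * frob H) by have := frob_ge0 P; have := frob_ge0 H; nra.
rewrite !frob_sq in HP_sq *.
(* |P_ij|^2 <= 2 |H_ij - P_ij|^2 + 2 |H_ij|^2 *)
apply: Rle_trans (_ : _ <= vsum (fun i => vsum (fun j =>
  2 * (msub H P i j * msub H P i j) + 2 * (H i j * H i j)))) _.
  apply: vsum_le => i; apply: vsum_le => j; rewrite /msub.
  by have := Rle_0_sqr (2 * H i j - P i j); rewrite /Rsqr; nra.
rewrite (eq_vsum (G := fun i => 2 * vsum (fun j => msub H P i j * msub H P i j) +
  2 * vsum (fun j => H i j * H i j))); last by move=> i; rewrite vsumD !vsumZ.
rewrite vsumD !vsumZ; lra.
Qed.

Definition strict_incr (t : nat -> nat) := forall n, (t n < t (S n))%coq_nat.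

Lemma strict_incr_ge t : strict_incr t -> forall n, (n <= t n)%coq_nat.
Proof. by move=> t_incr; elim=> [|n IH]; [lia | have := t_incr n; lia]. Qed.

Lemma strict_incr_comp t s : strict_incr t -> strict_incr s -> strict_incr (fun n => t (s n)).
Proof.
move=> t_incr s_incr n.
have t_mono a b : (a < b)%coq_nat -> (t a < t b)%coq_nat.
  elim: b => [|b IH] ab; first lia.
  by have := t_incr b; case: (Nat.eq_dec a b) => [->|?]; [lia | have := IH ltac:(lia); lia].
exact/t_mono/s_incr.
Qed.

Lemma Un_cv_subseq u l t : strict_incr t -> Un_cv u l -> Un_cv (fun n => u (t n)) l.
Proof.
move=> t_incr u_cv e e0; have [K HK] := u_cv e e0.
by exists K => n n_ge; apply: HK; have := strict_incr_ge t_incr n; lia.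
Qed.

Lemma inv_INR_small e : 0 < e -> exists K, forall n, (K <= n)%coq_nat -> / (INR n + 1) < e.
Proof.
move=> e0; have [K [K_e K0]] := archimed_cor1 e e0.
exists K => n n_ge; apply: Rle_lt_trans K_e; apply: Rinv_le_contravar; first exact: lt_0_INR.
by have := le_INR _ _ n_ge; lra.
Qed.

Lemma inv_INR_le n m : (n <= m)%coq_nat -> / (INR m + 1) <= / (INR n + 1).
Proof.
move=> nm; apply: Rinv_le_contravar; first by have := pos_INR n; lra.
by have := le_INR _ _ nm; lra.
Qed.

Lemma inv_INR_pos n : 0 < / (INR n + 1).
Proof. by apply: Rinv_0_lt_compat; have := pos_INR n; lra. Qed.

Lemma Rseq_cvg_subseq (u : nat -> R) B : (forall n, Rabs (u n) <= B) ->
  exists t l, strict_incr t /\ Un_cv (fun n => u (t n)) l.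
Proof.
move=> u_le.
have [l l_adh] := @Bolzano_Weierstrass u _ (compact_P3 (-B) B)
  (fun n => proj1 (Rabs_le_between (u n) B) (u_le n)).
have near K n : exists p, (K <= p)%coq_nat /\ Rabs (u p - l) < / (INR n + 1).
  have nbhd : neighbourhood (fun y => Rabs (y - l) < / (INR n + 1)) l.
    by exists (mkposreal _ (inv_INR_pos n)).
  have [p [? ?]] := l_adh _ K nbhd.
  by exists p.
pose f K n := proj1_sig (constructive_indefinite_description _ (near K n)).
have fP K n : (K <= f K n)%coq_nat /\ Rabs (u (f K n) - l) < / (INR n + 1).
  by rewrite /f; case: constructive_indefinite_description.
pose fix t n := if n is S m then f (S (t m)) (S m) else f 0%nat 0%nat.
exists t, l; split; first by move=> n /=; have [] := fP (S (t n)) (S n); lia.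
move=> e e0; have [K HK] := inv_INR_small e0.
exists K => n n_ge; rewrite /R_dist.
have : Rabs (u (t n) - l) < / (INR n + 1) by case: n {n_ge} => [|n] /=; apply: (proj2 (fP _ _)).
by have := HK n n_ge; lra.
Qed.

Section VecSeq.
Variable N : nat.

Lemma vseq_cvg_subseq (y : nat -> vec N) B : (forall n, vnorm (y n) <= B) ->
  exists t (l : vec N), strict_incr t /\ vconv (fun n => y (t n)) l.
Proof.
move=> y_le.
(* extract convergent subsequences coordinate after coordinate *)
have coords m : exists t (l : vec N), strict_incr t /\
    forall i : 'I_N, (i < m)%N -> Un_cv (fun n => y (t n) i) (l i).
  elim: m => [|m [t [l [t_incr l_lim]]]]; first by exists id, (@vzero N); split=> // n /=; lia.
  case: (ltnP m N) => [mN|Nm]; last first.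
    by exists t, l; split=> // i im; apply/l_lim/(leq_trans (ltn_ord i) Nm).
  set i0 : 'I_N := Ordinal mN.
  have [s [l0 [s_incr l0_lim]]] := Rseq_cvg_subseq (u := fun n => y (t n) i0)
     (fun n => Rle_trans _ _ _ (coord_le_vnorm _ _) (y_le _)).
  exists (fun n => t (s n)), (fun i => if i == i0 then l0 else l i).
  split=> [|i]; first exact: strict_incr_comp.
  case: eqP => [->|i_neq] // im.
  apply: (Un_cv_subseq (u := fun n => y (t n) i)) => //; apply: l_lim.
  rewrite ltnS leq_eqVlt in im; case/orP: im => // /eqP i_eq.
  by case: i_neq; apply: val_inj.
have [t [l [t_incr l_lim]]] := coords N.
exists t, l; split=> // e e0.
have eN : 0 < e / (INR N + 1) by apply: Rdiv_lt_0_compat; have := pos_INR N; lra.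
have K_ex (i : 'I_N) : exists K, forall n, (n >= K)%coq_nat ->
    R_dist (y (t n) i) (l i) < e / (INR N + 1) by exact: l_lim.
pose K i := proj1_sig (constructive_indefinite_description _ (K_ex i)).
have KP i : forall n, (n >= K i)%coq_nat -> R_dist (y (t n) i) (l i) < e / (INR N + 1).
  by rewrite /K; case: constructive_indefinite_description.
exists (\max_(i < N) K i) => n n_ge.
apply: Rle_lt_trans (vnorm_le_sum_abs _) _.
apply: Rle_lt_trans (_ : _ <= vsum (fun _ : 'I_N => e / (INR N + 1))) _.
  apply: vsum_le => i; apply/Rlt_le/KP/leP.
  by apply: leq_trans n_ge; exact: leq_bigmax.
rewrite vsum_const.
have -> : INR N * (e / (INR N + 1)) = e * (INR N / (INR N + 1)).
  by field; have := pos_INR N; lra.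
have : INR N / (INR N + 1) < 1.
  have := pos_INR N => ?.
  by apply: (Rmult_lt_reg_r (INR N + 1)); [lra | rewrite /Rdiv Rmult_assoc Rinv_l; lra].
nra.
Qed.

End VecSeq.

Fixpoint psum (f : nat -> R) (n : nat) : R :=
  if n is S m then psum f m + f m else 0.

Lemma sum_f_R0_psum f n : sum_f_R0 f n = psum f (S n).
Proof. by elim: n => [|n IH] /=; [ring | rewrite IH]. Qed.

Lemma psum_mono f m n : (forall j, 0 <= f j) -> (m <= n)%coq_nat -> psum f m <= psum f n.
Proof.
move=> f0; elim: n => [|n IH] mn; first by rewrite (_ : m = 0%nat); [apply: Rle_refl | lia].
case: (Nat.eq_dec m (S n)) => [->|?]; first lra.
by have := IH ltac:(lia); have := f0 n; rewrite /=; lra.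
Qed.

Lemma psum_ge0 f n : (forall j, 0 <= f j) -> 0 <= psum f n.
Proof. by move=> f0; have := psum_mono f0 (le_0_n n). Qed.

Lemma psum_shift f n : psum f (S n) = f 0%nat + psum (fun j => f (S j)) n.
Proof. by elim: n => [|n IH] /=; [ring | move: IH => /= ->; ring]. Qed.

Lemma psumZ a f n : psum (fun j => a * f j) n = a * psum f n.
Proof. by elim: n => [|n IH] /=; [ring | rewrite IH; ring]. Qed.

Lemma psum_le_tail a b K n : (forall j, 0 <= a j) -> (forall j, 0 <= b j) ->
  (forall j, (K <= j)%coq_nat -> a j <= b j) -> psum a n <= psum a K + psum b n.
Proof.
move=> a0 b0 ab; elim: n => [|n IH]; first by have := psum_ge0 K a0; rewrite /=; lra.
case: (Compare_dec.le_lt_dec K n) => Kn; first by have := ab n Kn; rewrite /=; lra.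
have := psum_mono a0 (m := S n) (n := K) ltac:(lia).
by have := psum_ge0 (S n) b0; lra.
Qed.

Lemma infinite_sum_of_psum_le f B : (forall j, 0 <= f j) -> (forall n, psum f n <= B) ->
  exists l, infinite_sum f l.
Proof.
move=> f0 f_le.
have incr : Un_growing (sum_f_R0 f) by move=> n /=; have := f0 (S n); lra.
have bounded : has_ub (sum_f_R0 f).
  by exists B => _ [i ->]; rewrite sum_f_R0_psum.
have [l l_lim] := growing_cv _ incr bounded.
by exists l.
Qed.

Section Length.
Variable N : nat.
Variables (x : nat -> vec N) (D : nat -> R).
Hypothesis step_le : forall k, vnorm (vsub (x (S k)) (x k)) <= D k.

Lemma vnorm_sub_le_psum k m : (k <= m)%coq_nat ->
  vnorm (vsub (x m) (x k)) <= psum D m - psum D k.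
Proof.
elim: m => [|m IH] km.
  by rewrite (_ : k = 0%nat) ?vnorm_sub_self /=; [lra | lia].
case: (Nat.eq_dec k (S m)) => [->|?]; first by rewrite vnorm_sub_self; lra.
have := IH ltac:(lia); have := vnorm_triangle (x (S m)) (x m) (x k).
by have := step_le m; rewrite /=; lra.
Qed.

Hypothesis D_ge0 : forall k, 0 <= D k.

(* Once started close enough to xs, the iterates can never leave the ball:
   summing the step inequality telescopes the Phi terms. *)
Lemma psum_bounded_of_step_in_ball (Phi : nat -> R) xs delta beta K :
  0 <= beta -> (forall k, (S K <= k)%coq_nat -> 0 <= Phi k) ->
  (forall k, (K <= k)%coq_nat -> vnorm (vsub (x (S k)) xs) < delta ->
       2 * D (S k) <= D k + beta * (Phi (S k) - Phi (S (S k)))) ->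
  vnorm (vsub (x (S K)) xs) + D K + beta * Phi (S K) < delta ->
  forall m, psum D m <= psum D (S K) + D K + beta * Phi (S K).
Proof.
move=> beta0 Phi0 step start.
have D_K := D_ge0 K; have Phi_K := Phi0 (S K) (le_n _).
have inv n : vnorm (vsub (x (S K + n)%coq_nat) xs) < delta /\
    psum D (S (S K + n)%coq_nat) - psum D (S K) + D (S K + n)%coq_nat <=
    D K + beta * (Phi (S K) - Phi (S (S K + n)%coq_nat)).
  elim: n => [|n [in_ball sum_le]].
    rewrite Nat.add_0_r; split; first nra.
    by have := step K (le_n K) ltac:(nra); rewrite /=; lra.
  rewrite -plus_n_Sm; have Phi_n := Phi0 (S (S K + n)%coq_nat) ltac:(lia); have D_n := D_ge0 (S K + n)%coq_nat.
  have next : vnorm (vsub (x (S (S K + n)%coq_nat)) xs) < delta.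
    have := vnorm_triangle (x (S (S K + n)%coq_nat)) (x (S K)) xs.
    have := vnorm_sub_le_psum (k := S K) (m := S (S K + n)%coq_nat) ltac:(lia).
    nra.
  split=> //; have := step (S K + n)%coq_nat ltac:(lia) next.
  by move: sum_le; rewrite /=; lra.
move=> m; case: (Compare_dec.le_lt_dec m (S K)) => m_le.
  by have := psum_mono D_ge0 m_le; nra.
have [n ->] : exists n, m = (S K + n)%coq_nat by exists (m - S K)%coq_nat; lia.
have [_ sum_le] := inv n.
have := psum_mono D_ge0 (m := (S K + n)%coq_nat) (n := S (S K + n)%coq_nat) ltac:(lia).
have := D_ge0 (S K + n)%coq_nat; have := Phi0 (S (S K + n)%coq_nat) ltac:(lia).
nra.
Qed.

End Length.

Lemma vconv_of_summable_steps N (x : nat -> vec N) xs l :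
  infinite_sum (fun k => vnorm (vsub (x (S k)) (x k))) l ->
  (forall e K, 0 < e -> exists j, (K <= j)%coq_nat /\ vnorm (vsub (x j) xs) < e) ->
  vconv x xs.
Proof.
move=> summable cluster e e0.
have [K K_cauchy] := summable _ (ltac:(lra) : 0 < e / 4).
exists (S K) => k /leP k_ge.
have [k' ek] : exists k', k = S k' by exists (Nat.pred k); lia.
subst k.
have [j [j_ge j_near]] := cluster (e / 2) (S k') (ltac:(lra) : 0 < e / 2).
have [j' ej] : exists j', j = S j' by exists (Nat.pred j); lia.
subst j.
have := vnorm_sub_le_psum (D := fun k => vnorm (vsub (x (S k)) (x k))) (fun _ => Rle_refl _)
  (k := S k') (m := S j') ltac:(lia).
rewrite -!sum_f_R0_psum vnorm_subC.
have := K_cauchy k' ltac:(lia); have := K_cauchy j' ltac:(lia); rewrite /R_dist.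
move=> /Rabs_lt_between ? /Rabs_lt_between ?.
have := vnorm_triangle (x (S k')) (x (S j')) xs; lra.
Qed.

Definition desingularizing (eta : R) (phi phi' : R -> R) : Prop :=
  [/\ phi 0 = 0,
      forall t, 0 <= t < eta -> 0 <= phi t,
      forall e, 0 < e -> exists d, 0 < d /\ forall s, 0 <= s < eta -> s < d -> phi s < e,
      forall a b th, 0 <= a < eta -> 0 <= b < eta -> 0 <= th <= 1 ->
        th * phi a + (1 - th) * phi b <= phi (th * a + (1 - th) * b)
    & forall t, 0 < t < eta -> derivable_pt_lim phi t (phi' t) /\ 0 < phi' t].

Lemma desingularizing_tangent eta phi phi' s t : desingularizing eta phi phi' ->
  0 <= s -> s < t -> t < eta -> phi s - phi t <= phi' t * (s - t).
Proof.
move=> [_ _ _ concave deriv] s0 st t_eta; apply: Rnot_lt_le => gap_pos.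
have [dphi _] := deriv t ltac:(lra).
set g := phi s - phi t - phi' t * (s - t).
have e0 : 0 < g / (2 * (t - s)) by apply: Rdiv_lt_0_compat; rewrite /g; lra.
have [del Hdel] := dphi _ e0.
(* move from t towards s by th (t - s), small enough for the derivative estimate *)
set th := Rmin 1 (del / (2 * (t - s))).
have th0 : 0 < th by apply: Rmin_pos; [lra | apply: Rdiv_lt_0_compat; [exact: cond_pos | lra]].
have th1 : th <= 1 := Rmin_l _ _.
have th_del : th * (t - s) <= del / 2.
  have := Rmult_le_compat_r (t - s) _ _ ltac:(lra) (Rmin_r 1 (del / (2 * (t - s)))).
  by rewrite (_ : del / (2 * (t - s)) * (t - s) = del / 2) //; field; lra.
set hh := th * (s - t).
have hh_neg : hh < 0 by rewrite /hh; nra.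
have hh_small : Rabs hh < del.
  by rewrite Rabs_left // /hh; have := cond_pos del; lra.
have := Hdel hh ltac:(lra) hh_small.
rewrite (_ : t + hh = th * s + (1 - th) * t); last by rewrite /hh; ring.
have := concave s t th ltac:(lra) ltac:(lra) ltac:(lra).
set q := phi (th * s + (1 - th) * t).
move=> conc /Rabs_lt_between [slope_low _].
have : q - phi t <= (phi' t - g / (2 * (t - s))) * hh.
  have -> : q - phi t = (q - phi t) / hh * hh by field; lra.
  by move: slope_low; move: ((q - phi t) / hh) => r ?; nra.
have -> : (phi' t - g / (2 * (t - s))) * hh = th * (phi' t * (s - t) + g / 2).
  by rewrite /hh; field; lra.
move=> above.
have : th * (phi s - phi t) <= th * (phi' t * (s - t) + g / 2) by lra.
move/(Rmult_le_reg_l _ _ _ th0); rewrite /g; lra.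
Qed.

Lemma KL_desingularizing N (f : efun N) xs fs : KL f -> critical f xs -> f xs = EFin fs ->
  exists eta delta phi phi', 0 < eta /\ 0 < delta /\ desingularizing eta phi phi' /\
    forall z fz p, vnorm (vsub z xs) < delta -> f z = EFin fz -> fs < fz < fs + eta ->
      limiting_subdiff f z p -> 1 <= phi' (fz - fs) * vnorm p.
Proof.
move=> [_ [_ KL_at]] crit fxs.
have [eta [delta [phi [phi' [eta0 [delta0 [phi0 [phi_ge0 [phi_cont [concave [deriv KL_ineq]]]]]]]]]]]
  := KL_at xs (ex_intro _ (@vzero N) crit) fs fxs.
(* eta may be +oo *)
have [eta' [eta'0 eta'_lt]] : exists eta', 0 < eta' /\ forall t, t < eta' -> Rlt_e t eta.
  by case: eta eta0 {concave deriv KL_ineq phi_ge0 phi_cont} => [r|] /= r0;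
    [exists r | exists 1; split; [lra|]].
exists eta', delta, phi, phi'; do 3?split=> //; last first.
  by move=> z fz p ? ? ?; apply: KL_ineq => //; [lra | apply: eta'_lt; lra].
split=> //.
- by move=> t [? ?]; apply: phi_ge0 => //; exact: eta'_lt.
- move=> e e0; have [d [d0 Hd]] := phi_cont 0 (Rle_refl 0) (eta'_lt 0 eta'0) e e0.
  exists d; split=> // s [s0 ?] sd; have := Hd s s0 (eta'_lt s ltac:(lra)).
  rewrite phi0 !Rminus_0_r => /(_ ltac:(rewrite Rabs_right; lra)).
  by move/Rabs_lt_between; lra.
- by move=> a b th [? ?] [? ?] ?; apply: concave => //; exact: eta'_lt.
- by move=> t [? ?]; have [? [_ ?]] := deriv t ltac:(lra) (eta'_lt t ltac:(lra)).
Qed.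

Lemma limiting_of_frechet N (f : efun N) z v : frechet_subdiff f z v -> limiting_subdiff f z v.
Proof.
move=> fz_v; have [fz [fzE _]] := fz_v; exists fz; split=> //.
exists (fun _ => z), (fun _ => fz), (fun _ => v).
have const_cv (w : vec N) : vconv (fun _ => w) w.
  by move=> e e0; exists 0%nat => k _; rewrite vnorm_sub_self.
do 3?split=> //; first by move=> e e0; exists 0%nat => n _; rewrite /R_dist Rminus_diag_eq // Rabs_R0.
Qed.

Section Indicator.
Variable N : nat.
Variables (C : vec N -> Prop) (h : vec N -> R) (gradh : vec N -> vec N).
Hypothesis h_grad : forall z, has_gradient h z (gradh z).

Lemma h_plus_ind_in y : C y -> h_plus_ind h C y = EFin (h y).
Proof. by move=> Cy; rewrite /h_plus_ind; case: excluded_middle_informative. Qed.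

Lemma critical_of_vanishing_subgrad (z v : nat -> vec N) xs :
  (forall n, C (z n)) -> C xs -> vconv z xs ->
  (forall n, frechet_subdiff (h_plus_ind h C) (z n) (v n)) -> vconv v (@vzero N) ->
  critical (h_plus_ind h C) xs.
Proof.
move=> Cz Cxs z_cv v_subgrad v_cv.
exists (h xs); split; first exact: h_plus_ind_in.
exists z, (fun n => h (z n)), v; do 3?split=> //; first by move=> n; exact: h_plus_ind_in.
move=> e e0; have [d [d0 Hd]] := h_continuous h_grad xs e0.
have [K HK] := z_cv d d0; exists K => n /leP n_ge.
exact/Hd/HK.
Qed.

End Indicator.

Lemma twice_le_of_KL_inequality a b lam1 D Dprev T p W :
  0 < a -> 0 < lam1 -> 0 < p -> 0 <= D -> 0 <= Dprev ->
  a / lam1 * (D * D) * p <= T -> 1 <= p * W -> lam1 * W <= b * Dprev ->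
  2 * D <= Dprev + b / a * T.
Proof.
move=> a0 lam1_0 p0 D0 Dprev0 decr KL_W W_le.
have q0 : 0 <= a / lam1 * (D * D) by apply: Rmult_le_pos; [apply: Rlt_le; exact: Rdiv_lt_0_compat | nra].
have T0 : 0 <= T by nra.
(* a D^2 = lam1 (a / lam1) D^2 <= lam1 T W <= T b Dprev *)
have : a * (D * D) <= T * (b * Dprev).
  have -> : a * (D * D) = lam1 * (a / lam1 * (D * D)) by field; lra.
  have : a / lam1 * (D * D) <= T * W by nra.
  nra.
have -> : b / a * T = (T * b) / a by field; lra.
set X := T * b / a; have aX : a * X = T * b by rewrite /X; field; lra.
move=> DD; have DD' : D * D <= X * Dprev by apply: (Rmult_le_reg_l a) => //; nra.
have X0 : 0 <= X.
  have W0 : 0 < W by nra.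
  have b0 : 0 < b by nra.
  by apply: (Rmult_le_reg_l a) => //; nra.
(* AM-GM: D^2 <= X Dprev implies 2 D <= Dprev + X *)
apply: Rnot_lt_le => lt.
have : (Dprev + X) * (Dprev + X) < (2 * D) * (2 * D) by apply: Rmult_le_0_lt_compat; lra.
have := Rle_0_sqr (X - Dprev); rewrite /Rsqr; nra.
Qed.

Section Algorithm.
Variable N : nat.
Variables (C : vec N -> Prop) (h : vec N -> R) (gradh : vec N -> vec N)
  (L eps lambar : R) (lam : nat -> R) (x : nat -> vec N) (H P : nat -> mat N) (d : nat -> vec N).
Hypothesis h_grad : forall z, has_gradient h z (gradh z).
Hypothesis L0 : 0 < L.
Hypothesis gradh_lip : lipschitz gradh L.
Hypothesis eps0 : 0 < eps.
Hypothesis H_clarke : forall k, clarke_hessian gradh (x k) (H k).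
Hypothesis P_proj : forall k, is_proj_psd (H k) (P k).
Hypothesis d_solves : forall k i, mulmv (madd (P k) (mscale eps (@idm N))) (d k) i = gradh (x k) i.
Hypothesis x_next : forall k, in_proj_A C (madd (P k) (mscale eps (@idm N)))
                 (vsub (x k) (vscale (lam k) (d k))) (x (S k)).
Hypothesis lam_range : forall k, 0 < lam k <= lambar.
Hypothesis lambar_lt : lambar < eps / L.

Let f := h_plus_ind h C.
Let A k := madd (P k) (mscale eps (@idm N)).
Let dx k := vnorm (vsub (x (S k)) (x k)).

Lemma A_sym k i j : A k i j = A k j i.
Proof. by have [[P_sym _] _] := P_proj k; rewrite /A /madd /mscale /idm P_sym eq_sym. Qed.

Lemma A_coercive k w : eps * dot w w <= dot (mulmv (A k) w) w.
Proof.
have [[_ P_psd] _] := P_proj k; have := P_psd w.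
rewrite (dot_sym (mulmv (A k) w)) /dot (eq_vsum (F := fun i => w i * mulmv (A k) w i)
  (G := fun i => w i * mulmv (P k) w i + eps * (w i * w i))); last first.
  by move=> i; rewrite /A mulmv_shift; ring.
rewrite vsumD vsumZ; lra.
Qed.

(* the entries of H k are bounded by L and |P k| <= 2 |H k| *)
Definition A_bound := 2 * sqrt (vsum (fun _ : 'I_N => vsum (fun _ : 'I_N => L * L))) + eps.

Lemma A_bound_pos : 0 < A_bound.
Proof. by rewrite /A_bound; have := sqrt_pos (vsum (fun _ : 'I_N => vsum (fun _ : 'I_N => L * L))); lra. Qed.

Lemma vnorm_mulmv_A_le k w : vnorm (mulmv (A k) w) <= A_bound * vnorm w.
Proof.
have -> : mulmv (A k) w = (fun i => mulmv (P k) w i + eps * w i).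
  by apply: functional_extensionality => i; rewrite /A mulmv_shift.
apply: Rle_trans (vnorm_add_le _ _) _; rewrite vnorm_scale Rabs_right; last lra.
have := vnorm_mulmv_le (P k) w; have := frob_proj_psd_le (P_proj k).
have := frob_le_of_entries (clarke_hessian_entry_le gradh_lip (H_clarke k)).
have := frob_ge0 (P k); have := vnorm_ge0 w; rewrite /A_bound; nra.
Qed.

Lemma x_next_in k : C (x (S k)).
Proof. by have [] := x_next k. Qed.

Definition descent_coef := (eps - L * lambar) / 2.

Lemma descent_coef_pos : 0 < descent_coef.
Proof.
have : L * lambar < eps.
  by have := Rmult_lt_compat_l L _ _ L0 lambar_lt; rewrite /Rdiv -Rmult_assoc Rinv_r_simpl_m; lra.
by rewrite /descent_coef; lra.
Qed.

Lemma sufficient_decrease k : C (x k) ->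
  descent_coef / lam k * (dx k * dx k) <= h (x k) - h (x (S k)).
Proof.
move=> Cxk; have [_ x_min] := x_next k; have := x_min (x k) Cxk.
set u := vsub (x (S k)) (x k); set m : vec N := fun i => lam k * d k i.
have -> : vsub (x (S k)) (vsub (x k) (vscale (lam k) (d k))) = (fun i => u i + m i).
  by apply: functional_extensionality => i; rewrite /u /m /vsub /vscale; ring.
have -> : vsub (x k) (vsub (x k) (vscale (lam k) (d k))) = m.
  by apply: functional_extensionality => i; rewrite /m /vsub /vscale; ring.
rewrite quad_form_add; last exact: A_sym.
have -> : mulmv (A k) m = (fun i => lam k * gradh (x k) i).
  by apply: functional_extensionality => i; rewrite /m mulmvZ d_solves.
rewrite dotZl -/(A k) => min_le.
(* the minimality of x (S k) against x k gives lam k <grad h(x k), u> <= - eps/2 |u|^2 *)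
have := A_coercive k u; have := descent_lemma h_grad gradh_lip (x k) (x (S k)).
rewrite -/u (vnorm_sq u) -/(dx k) => /Rabs_le_between [_ desc] coer.
have [lam0 lam_le] := lam_range k.
have uu0 := dot_ge0 u.
have : lam k * (h (x k) - h (x (S k))) >= descent_coef * dot u u.
  have := Rmult_le_compat_l (lam k) _ _ (Rlt_le _ _ lam0) desc.
  have : lam k * (L * dot u u) <= lambar * (L * dot u u) by apply: Rmult_le_compat_r; nra.
  rewrite /descent_coef; nra.
rewrite -(vnorm_sq u) -/(dx k) => gain.
apply: (Rmult_le_reg_l (lam k)) => //.
have -> : lam k * (descent_coef / lam k * (dx k * dx k)) = descent_coef * (dx k * dx k).
  by field; lra.
lra.
Qed.

(* the Frechet subgradient of f at x (S k) given by the optimality of the projection step *)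
Definition subgrad k : vec N := fun i => gradh (x (S k)) i - gradh (x k) i
   - (1 / lam k) * mulmv (A k) (vsub (x (S k)) (x k)) i.

Lemma subgrad_bound k : vnorm (subgrad k) <= (L + A_bound / lam k) * dx k.
Proof.
have -> : subgrad k = (fun i => vsub (gradh (x (S k))) (gradh (x k)) i +
    (- (1 / lam k)) * mulmv (A k) (vsub (x (S k)) (x k)) i).
  by apply: functional_extensionality => i; rewrite /subgrad /vsub; ring.
apply: Rle_trans (vnorm_add_le _ _) _.
have [lam0 _] := lam_range k; have inv0 : 0 < 1 / lam k by apply: Rdiv_lt_0_compat; lra.
rewrite vnorm_scale Rabs_Ropp Rabs_right; last lra.
have := gradh_lip (x (S k)) (x k); have := vnorm_mulmv_A_le k (vsub (x (S k)) (x k)).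
rewrite -/(dx k) => A_le lip.
have := Rmult_le_compat_l _ _ _ (Rlt_le _ _ inv0) A_le.
have -> : 1 / lam k * (A_bound * dx k) = A_bound / lam k * dx k by field; lra.
move=> ?; lra.
Qed.

Lemma dot_subgrad k u : dot (subgrad k) u = dot (gradh (x (S k))) u -
  (1 / lam k) * dot (mulmv (A k) (vsub (x (S k)) (vsub (x k) (vscale (lam k) (d k))))) u.
Proof.
have [lam0 _] := lam_range k.
have -> : vsub (x (S k)) (vsub (x k) (vscale (lam k) (d k))) =
    (fun j => vsub (x (S k)) (x k) j + lam k * d k j).
  by apply: functional_extensionality => j; rewrite /vsub /vscale; ring.
rewrite /dot -vsumZ -vsumB; apply: eq_vsum => i.
by rewrite mulmvD mulmvZ /A d_solves /subgrad /A; field; lra.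
Qed.

Lemma subgrad_frechet k : frechet_subdiff f (x (S k)) (subgrad k).
Proof.
exists (h (x (S k))); split; first exact/h_plus_ind_in/x_next_in.
move=> e e0; have [lam0 _] := lam_range k; have cA0 := A_bound_pos.
have [d1 [d1_0 Hd1]] := h_grad (x (S k)) (ltac:(lra) : 0 < e / 2).
have d2_0 : 0 < e * lam k / A_bound by apply: Rdiv_lt_0_compat => //; nra.
exists (Rmin d1 (e * lam k / A_bound)); split; first exact: Rmin_pos.
move=> y y_near; rewrite /f /h_plus_ind; case: excluded_middle_informative => // Cy.
have y_d1 : vnorm (vsub y (x (S k))) < d1 by have := Rmin_l d1 (e * lam k / A_bound); lra.
have y_d2 : vnorm (vsub y (x (S k))) < e * lam k / A_bound.
  by have := Rmin_r d1 (e * lam k / A_bound); lra.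
have [_ x_min] := x_next k; have := x_min y Cy; rewrite dot_subgrad.
set z := vsub (x k) (vscale (lam k) (d k)).
set u := vsub y (x (S k)) in y_d1 y_d2 *; set m := vsub (x (S k)) z.
have -> : vsub y z = (fun i => u i + m i).
  by apply: functional_extensionality => i; rewrite /u /m /vsub; ring.
rewrite quad_form_add; last exact: A_sym.
rewrite -/(A k) => min_le.
have quad_le : dot (mulmv (A k) u) u <= A_bound * (vnorm u * vnorm u).
  apply: Rle_trans (dot_le_vnorm _ _) _.
  by have := vnorm_mulmv_A_le k u; have := vnorm_ge0 u; nra.
have := Hd1 y y_d1; rewrite -/u => /Rabs_le_between [grad_low _].
have u0 := vnorm_ge0 u.
(* the quadratic term is O(|u|^2), hence at most e/2 |u| on the ball of radius e lam k / A_bound *)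
have : - (1 / lam k) * dot (mulmv (A k) m) u <= e / 2 * vnorm u.
  have Au : A_bound * vnorm u <= e * lam k.
    have := Rmult_lt_compat_l _ _ _ cA0 y_d2.
    have -> : A_bound * (e * lam k / A_bound) = e * lam k by field; lra.
    move=> ?; lra.
  have -> : - (1 / lam k) * dot (mulmv (A k) m) u = (- dot (mulmv (A k) m) u) / lam k.
    by field; lra.
  apply: (Rmult_le_reg_l (lam k)) => //.
  have -> : lam k * (- dot (mulmv (A k) m) u / lam k) = - dot (mulmv (A k) m) u by field; lra.
  nra.
rewrite /=; lra.
Qed.

Hypothesis C_closed : closed_vset C.
Hypothesis x_bounded : exists B, forall k, vnorm (x k) <= B.
Hypothesis lam_not_summable : ~ (exists l, infinite_sum lam l).

Lemma h_bounded_below : exists lb, forall k, lb <= h (x k).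
Proof.
have [B x_le] := x_bounded; set g0 := gradh (@vzero N).
exists (h (@vzero N) - vnorm g0 * B - L / 2 * (B * B)) => k.
have := descent_lemma h_grad gradh_lip (@vzero N) (x k); rewrite vsub0 => /Rabs_le_between [low _].
have := Cauchy_Schwarz g0 (x k); move=> /Rabs_le_between [cs _].
have := x_le k; have := vnorm_ge0 (x k); have := vnorm_ge0 g0 => ? ? ?.
have : L / 2 * (vnorm (x k) * vnorm (x k)) <= L / 2 * (B * B) by apply: Rmult_le_compat_l; nra.
have := Rmult_le_compat_l (vnorm g0) _ _ (vnorm_ge0 g0) (x_le k).
rewrite -/g0 in low; lra.
Qed.

Lemma h_nonincreasing m n : (m <= n)%coq_nat -> h (x (S n)) <= h (x (S m)).
Proof.
elim: n => [|n IH] mn; first by rewrite (_ : m = 0%nat); [apply: Rle_refl | lia].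
case: (Nat.eq_dec m (S n)) => [->|?]; first exact: Rle_refl.
have := IH ltac:(lia); have := sufficient_decrease (x_next_in n).
have [lam0 _] := lam_range (S n).
have : 0 <= descent_coef / lam (S n) * (dx (S n) * dx (S n)).
  apply: Rmult_le_pos; last nra.
  by apply/Rlt_le/Rdiv_lt_0_compat => //; exact: descent_coef_pos.
lra.
Qed.

Lemma weighted_steps_le lb : (forall k, lb <= h (x k)) -> forall n,
  psum (fun j => descent_coef / lam (S j) * (dx (S j) * dx (S j))) n <= h (x 1%nat) - lb.
Proof.
move=> h_ge n; suff : psum (fun j => descent_coef / lam (S j) * (dx (S j) * dx (S j))) n <=
    h (x 1%nat) - h (x (S n)) by have := h_ge (S n); lra.
elim: n => [|n IH] /=; first lra.
by have := sufficient_decrease (x_next_in n); lra.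
Qed.

(* otherwise dx (S k) >= e lam (S k) eventually, and the summability of
   dx (S k)^2 / lam (S k) would force lam to be summable *)
Lemma small_step_infinitely_often e K : 0 < e ->
  exists k, (K <= k)%coq_nat /\ dx (S k) < e * lam (S k).
Proof.
move=> e0; apply: NNPP => no_small; apply: lam_not_summable.
have big_step k : (K <= k)%coq_nat -> e * lam (S k) <= dx (S k).
  by move=> ?; apply: Rnot_lt_le => ?; apply: no_small; exists k.
have [lb h_ge] := h_bounded_below; have a0 := descent_coef_pos.
have lam_ge0 j : 0 <= lam j by have [] := lam_range j; lra.
set b := fun j => dx j * dx j / (e * e * lam j).
have eel j : 0 < e * e * lam j.
  by have [lj _] := lam_range j; do 2?apply: Rmult_lt_0_compat.
have b_ge0 j : 0 <= b j.
  by rewrite /b; apply: Rmult_le_pos; [nra | apply: Rlt_le; apply: Rinv_0_lt_compat].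
have lam_le_b j : (S K <= j)%coq_nat -> lam j <= b j.
  move=> j_ge; have [k ek] : exists k, j = S k by exists (Nat.pred j); lia.
  subst j.
  have := big_step k ltac:(lia); have [? _] := lam_range (S k); have := vnorm_ge0 (vsub (x (S (S k))) (x (S k))).
  rewrite /b -/(dx (S k)) => ? ?.
  apply: (Rmult_le_reg_r (e * e * lam (S k))); first exact: eel.
  have -> : dx (S k) * dx (S k) / (e * e * lam (S k)) * (e * e * lam (S k)) = dx (S k) * dx (S k).
    by field; lra.
  have : 0 <= e * lam (S k) by nra.
  nra.
apply: (infinite_sum_of_psum_le (B := psum lam (S K) + b 0%nat + (h (x 1%nat) - lb) / (e * e * descent_coef))) => // n.
have := psum_le_tail n lam_ge0 b_ge0 lam_le_b.
have := psum_mono b_ge0 (m := n) (n := S n) ltac:(lia); rewrite psum_shift.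
have -> : psum (fun j => b (S j)) n =
    / (e * e * descent_coef) * psum (fun j => descent_coef / lam (S j) * (dx (S j) * dx (S j))) n.
  rewrite -psumZ; congr psum; apply: functional_extensionality => j.
  by rewrite /b; have [? _] := lam_range (S j); field; repeat split; apply: Rgt_not_eq; lra.
have := weighted_steps_le h_ge n.
have inv0 : 0 < / (e * e * descent_coef) by apply/Rinv_0_lt_compat/Rmult_lt_0_compat; nra.
rewrite /Rdiv [_ * / (e * e * descent_coef)]Rmult_comm; nra.
Qed.

Lemma subgrad_small k r : 0 <= r -> dx k <= r * lam k ->
  vnorm (subgrad k) <= (L * lambar + A_bound) * r.
Proof.
move=> r0 dx_le; apply: Rle_trans (subgrad_bound k) _.
have [lam0 lam_le] := lam_range k; have cA0 := A_bound_pos.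
have c0 : 0 <= L + A_bound / lam k.
  have : 0 < A_bound / lam k by apply: Rdiv_lt_0_compat.
  lra.
apply: Rle_trans (Rmult_le_compat_l _ _ _ c0 dx_le) _.
have -> : (L + A_bound / lam k) * (r * lam k) = (L * lam k + A_bound) * r by field; lra.
by apply: Rmult_le_compat_r => //; nra.
Qed.

Lemma critical_cluster_point : exists xs, C xs /\ critical f xs /\
  forall e K, 0 < e -> exists j, (K <= j)%coq_nat /\ vnorm (vsub (x (S j)) xs) < e /\ dx j < e.
Proof.
have small n : exists k, (n <= k)%coq_nat /\ dx (S k) < / (INR n + 1) * lam (S k).
  exact/small_step_infinitely_often/inv_INR_pos.
pose sg n := proj1_sig (constructive_indefinite_description _ (small n)).
have sgP n : (n <= sg n)%coq_nat /\ dx (S (sg n)) < / (INR n + 1) * lam (S (sg n)).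
  by rewrite /sg; case: constructive_indefinite_description.
have [B x_le] := x_bounded.
have [t [xs [t_incr y_cv]]] := vseq_cvg_subseq (y := fun n => x (S (S (sg n)))) (fun n => x_le _).
have t_ge := strict_incr_ge t_incr.
have lambar0 : 0 < lambar by have := lam_range 0%nat; lra.
(* along the subsequence the steps, hence the subgradients, are O(1 / n) *)
have dx_small n : dx (S (sg (t n))) <= / (INR n + 1) * lam (S (sg (t n))).
  have [_ ?] := sgP (t n); have := inv_INR_le (t_ge n); have [? _] := lam_range (S (sg (t n))).
  by nra.
exists xs; split; last split.
- by apply: (C_closed (x := fun n => x (S (S (sg (t n)))))) => // n; exact: x_next_in.
- apply: (critical_of_vanishing_subgrad h_grad (fun n => x_next_in _) _ y_cv
    (fun n => subgrad_frechet (S (sg (t n))))).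
    by apply: (C_closed (x := fun n => x (S (S (sg (t n)))))) => // n; exact: x_next_in.
  move=> e e0; have c0 : 0 < L * lambar + A_bound by have := A_bound_pos; nra.
  have [K HK] := inv_INR_small (Rdiv_lt_0_compat _ _ e0 c0).
  exists K => n /leP n_ge; rewrite vsub0.
  apply: Rle_lt_trans (subgrad_small (Rlt_le _ _ (inv_INR_pos n)) (dx_small n)) _.
  have := Rmult_lt_compat_l _ _ _ c0 (HK n n_ge).
  by have -> : (L * lambar + A_bound) * (e / (L * lambar + A_bound)) = e by field; lra.
- move=> e K e0.
  have [K1 HK1] := y_cv e e0; have [K2 HK2] := inv_INR_small (Rdiv_lt_0_compat _ _ e0 lambar0).
  have [n [Kn K1n K2n]] : exists n, [/\ (K <= n)%coq_nat, (K1 <= n)%coq_nat & (K2 <= n)%coq_nat].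
    by exists (K + K1 + K2)%coq_nat; split; lia.
  exists (S (sg (t n))); split; first by have := t_ge n; have := proj1 (sgP (t n)); lia.
  split; first by apply/HK1/leP.
  have := dx_small n; have := HK2 n K2n; have [_ ?] := lam_range (S (sg (t n))).
  move=> small_inv ?; have := Rmult_lt_compat_r _ _ _ lambar0 small_inv.
  have -> : e / lambar * lambar = e by field; lra.
  have := Rlt_le _ _ (inv_INR_pos n); nra.
Qed.

Lemma h_limit_at_cluster xs :
  (forall e K, 0 < e -> exists j, (K <= j)%coq_nat /\ vnorm (vsub (x (S j)) xs) < e) ->
  (forall k, h xs <= h (x (S k))) /\
  (forall e, 0 < e -> exists K, forall k, (K <= k)%coq_nat -> h (x (S k)) - h xs < e).
Proof.
move=> cluster; split=> [k|e e0].
  apply: Rnot_lt_le => lt; have [r [r0 Hr]] := h_continuous h_grad xs (ltac:(lra) : 0 < h xs - h (x (S k))).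
  have [j [j_ge j_near]] := cluster r k r0; have := Hr _ j_near.
  by have := h_nonincreasing j_ge; move=> ? /Rabs_lt_between; lra.
have [r [r0 Hr]] := h_continuous h_grad xs e0; have [j [_ j_near]] := cluster r 0%nat r0.
exists j => k k_ge; have := Hr _ j_near; have := h_nonincreasing k_ge.
by move=> ? /Rabs_lt_between; lra.
Qed.

Section KLPhase.
Variables (xs : vec N) (eta delta : R) (phi phi' : R -> R) (M : R).
Hypothesis phi_desing : desingularizing eta phi phi'.
Hypothesis KL_at_xs : forall z fz p, vnorm (vsub z xs) < delta -> f z = EFin fz ->
  h xs < fz < h xs + eta -> limiting_subdiff f z p -> 1 <= phi' (fz - h xs) * vnorm p.
Hypothesis h_above : forall k, h xs <= h (x (S k)).
Hypothesis lam_ratio_le : forall k, lam (S k) / lam k <= M.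

Let gap k := h (x k) - h xs.

Definition KL_coef := (L * lambar + A_bound * M) / descent_coef.

Lemma KL_coef_ge0 : 0 <= KL_coef.
Proof.
have M0 : 0 <= M.
  have := lam_ratio_le 0; have [? _] := lam_range 1%nat; have [? _] := lam_range 0%nat.
  have : 0 < lam 1%nat / lam 0%nat by apply: Rdiv_lt_0_compat.
  lra.
have := A_bound_pos; have := descent_coef_pos; have [? ?] := lam_range 0%nat => ? ?.
apply: Rmult_le_pos; last by apply/Rlt_le/Rinv_0_lt_compat.
by apply: Rplus_le_le_0_compat; apply: Rmult_le_pos; lra.
Qed.

Lemma KL_step K0 : (forall k, (K0 <= k)%coq_nat -> gap (S k) < eta) ->
  forall k, (K0 <= k)%coq_nat -> vnorm (vsub (x (S k)) xs) < delta ->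
  2 * dx (S k) <= dx k + KL_coef * (phi (gap (S k)) - phi (gap (S (S k)))).
Proof.
move=> gap_lt k k_ge near.
have gap0 := h_above k; have gap1 := h_above (S k).
have gap_eta := gap_lt k k_ge; have gap1_eta := gap_lt (S k) ltac:(lia).
have decr := sufficient_decrease (x_next_in k); rewrite -/(dx (S k)) in decr.
have [lam0 lam_le] := lam_range (S k); have [lamk0 _] := lam_range k.
have a0 := descent_coef_pos; have q0 : 0 < descent_coef / lam (S k) by apply: Rdiv_lt_0_compat.
have dx0 := vnorm_ge0 (vsub (x (S (S k))) (x (S k))); have dxk0 := vnorm_ge0 (vsub (x (S k)) (x k)).
rewrite -/(dx (S k)) in dx0; rewrite -/(dx k) in dxk0.
case: (Req_dec (gap (S (S k))) (gap (S k))) => [eq|neq].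
  have : dx (S k) * dx (S k) <= 0 by rewrite /gap in eq; nra.
  by rewrite eq Rminus_diag_eq // Rmult_0_r Rplus_0_r; nra.
have gap_pos : 0 < gap (S k) by rewrite /gap in neq *; nra.
have [deriv p0] := (match phi_desing with And5 _ _ _ _ d => d end) (gap (S k)) ltac:(lra).
have KL := KL_at_xs near (h_plus_ind_in h (x_next_in k))
  ltac:(rewrite /gap in gap_pos gap_eta; lra) (limiting_of_frechet (subgrad_frechet k)).
rewrite -/(gap (S k)) in KL.
have tangent := desingularizing_tangent (s := gap (S (S k))) (t := gap (S k)) phi_desing
  ltac:(rewrite /gap; lra)
  ltac:(rewrite /gap in neq *; nra) gap_eta.
apply: (twice_le_of_KL_inequality (lam1 := lam (S k)) (p := phi' (gap (S k)))
  (W := (L + A_bound / lam k) * dx k)) => //.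
- have : descent_coef / lam (S k) * (dx (S k) * dx (S k)) * phi' (gap (S k)) <=
      (gap (S k) - gap (S (S k))) * phi' (gap (S k)).
    by apply: Rmult_le_compat_r; [lra | rewrite /gap; lra].
  lra.
- have := Rmult_le_compat_l _ _ _ (Rlt_le _ _ p0) (subgrad_bound k).
  by rewrite -/(dx k) => ?; lra.
- rewrite -Rmult_assoc; apply: Rmult_le_compat_r => //.
  have -> : lam (S k) * (L + A_bound / lam k) = L * lam (S k) + A_bound * (lam (S k) / lam k).
    by field; lra.
  have := Rmult_le_compat_l _ _ _ (Rlt_le _ _ L0) lam_le.
  have := Rmult_le_compat_l _ _ _ (Rlt_le _ _ A_bound_pos) (lam_ratio_le k); lra.
Qed.

Lemma KL_start K0 : 0 < eta -> 0 < delta ->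
  (forall e, 0 < e -> exists K, forall k, (K <= k)%coq_nat -> gap (S k) < e) ->
  (forall e K, 0 < e -> exists j, (K <= j)%coq_nat /\ vnorm (vsub (x (S j)) xs) < e /\ dx j < e) ->
  exists J, (K0 <= J)%coq_nat /\ vnorm (vsub (x (S J)) xs) + dx J + KL_coef * phi (gap (S J)) < delta.
Proof.
move=> eta0 delta0 gap_cv cluster; have beta0 := KL_coef_ge0.
have [_ _ phi_cont _ _] := phi_desing.
have [dphi [dphi0 phi_small]] := phi_cont (delta / 3 / (KL_coef + 1)) ltac:(apply: Rdiv_lt_0_compat; lra).
have [K1 gap_small] := gap_cv _ (Rmin_pos _ _ dphi0 eta0).
have [J [J_ge [J_near dx_small]]] := cluster (delta / 3) (K0 + K1)%coq_nat ltac:(lra).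
exists J; split; first lia.
have gap_lt := gap_small J ltac:(lia).
have gap_ge : 0 <= gap (S J) by rewrite /gap; have := h_above J; lra.
have := Rmin_l dphi eta; have := Rmin_r dphi eta => ? ?.
have phi_lt := phi_small (gap (S J)) ltac:(lra) ltac:(lra).
have : KL_coef * phi (gap (S J)) < delta / 3.
  have := Rmult_lt_compat_l _ _ _ (ltac:(lra) : 0 < KL_coef + 1) phi_lt.
  have -> : (KL_coef + 1) * (delta / 3 / (KL_coef + 1)) = delta / 3 by field; lra.
  have [_ phi_ge0 _ _ _] := phi_desing.
  have := phi_ge0 (gap (S J)) ltac:(lra); nra.
lra.
Qed.

End KLPhase.

Hypothesis f_KL : KL f.
Hypothesis lam_ratio_bounded : exists M, forall k, lam (S k) / lam k <= M.

Lemma finite_length xs : C xs -> critical f xs ->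
  (forall e K, 0 < e -> exists j, (K <= j)%coq_nat /\ vnorm (vsub (x (S j)) xs) < e /\ dx j < e) ->
  exists l, infinite_sum dx l.
Proof.
move=> Cxs crit cluster.
have [h_above h_cv] : (forall k, h xs <= h (x (S k))) /\
    (forall e, 0 < e -> exists K, forall k, (K <= k)%coq_nat -> h (x (S k)) - h xs < e).
  by apply: h_limit_at_cluster => e K e0; have [j [? [? _]]] := cluster e K e0; exists j.
have [eta [delta [phi [phi' [eta0 [delta0 [desing KL_xs]]]]]]] :=
  KL_desingularizing f_KL crit (h_plus_ind_in h Cxs).
have [M lam_ratio] := lam_ratio_bounded.
have [K0 gap_lt] := h_cv eta eta0.
have [J [J_ge start]] := KL_start desing h_above lam_ratio K0 eta0 delta0 h_cv cluster.
have Phi0 k : (S J <= k)%coq_nat -> 0 <= phi (h (x k) - h xs).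
  move=> k_ge; have [k' ek] : exists k', k = S k' by exists (Nat.pred k); lia.
  subst k; have [_ phi_ge0 _ _ _] := desing.
  by apply: phi_ge0; split; [have := h_above k'; lra | apply: gap_lt; lia].
have := psum_bounded_of_step_in_ball (x := x) (D := dx) (fun k => Rle_refl _)
  (fun k => vnorm_ge0 _) (KL_coef_ge0 lam_ratio) Phi0
  (fun k k_ge => KL_step desing KL_xs h_above lam_ratio gap_lt (k := k) ltac:(lia)) start.
exact: infinite_sum_of_psum_le (fun k => vnorm_ge0 _).
Qed.

End Algorithm.

Theorem mainTheorem15 (N : nat) (C : vec N -> Prop) (h : vec N -> R)
  (gradh : vec N -> vec N) (L eps lambar : R) (lam : nat -> R)
  (x : nat -> vec N) (H P : nat -> mat N) (d : nat -> vec N) :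
  closed_vset C -> (exists c, C c) ->
  (forall z, has_gradient h z (gradh z)) -> 0 < L -> lipschitz gradh L ->
  KL (h_plus_ind h C) ->
  0 < eps ->
  (exists B, forall k, vnorm (x k) <= B) ->
  (* H_k in the generalized Hessian, P_k = proj_{S_+}(H_k), A_k = P_k + eps I *)
  (forall k, clarke_hessian gradh (x k) (H k)) ->
  (forall k, is_proj_psd (H k) (P k)) ->
  (* d_k = A_k^{-1} grad h(x^k) *)
  (forall k i, mulmv (madd (P k) (mscale eps (@idm N))) (d k) i = gradh (x k) i) ->
  (forall k, in_proj_A C (madd (P k) (mscale eps (@idm N)))
                 (vsub (x k) (vscale (lam k) (d k))) (x (S k))) ->
  (forall k, 0 < lam k <= lambar) -> lambar < eps / L ->
  ~ (exists l, infinite_sum lam l) ->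
  (exists M, forall k, lam (S k) / lam k <= M) ->
  (exists l, infinite_sum (fun k => vnorm (vsub (x (S k)) (x k))) l) /\
  (exists xs, vconv x xs /\ critical (h_plus_ind h C) xs).
Proof.
move=> C_closed _ h_grad L0 gradh_lip f_KL eps0 x_bounded H_clarke P_proj d_solves x_next
  lam_range lambar_lt lam_not_summable lam_ratio.
have [xs [Cxs [crit cluster]]] := critical_cluster_point h_grad L0 gradh_lip eps0 H_clarke
  P_proj d_solves x_next lam_range lambar_lt C_closed x_bounded lam_not_summable.
have [l summable] := finite_length h_grad L0 gradh_lip eps0 H_clarke P_proj d_solves x_next
  lam_range lambar_lt f_KL lam_ratio Cxs crit cluster.
split; first by exists l.
exists xs; split=> //; apply: (vconv_of_summable_steps summable) => e K e0.
by have [j [j_ge [near _]]] := cluster e K e0; exists (S j); split; first lia.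
Qed.
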